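(* Let $(P_t)_{t\ge0}$ be a measurable Markovian transition function on a Polish space $E$ with Borel $\sigma$-algebra $\mathcal{B}$, and let $m$ be a nonzero finite positive measure on $(E,\mathcal{B})$. Suppose there exists a sequence $t_n\nearrow\infty$ with $c((P_t)_t,m,(t_n)_n)<m(E)$. Then there exists a compact set $K\subset E$ such that $$\limsup_{t\to\infty}\frac1t\int_0^t m(P_s1_K)\,ds>0.$$
   Context: $c((P_t)_t,m,(t_n)_n):=\lim_{\varepsilon\searrow0}\sup_{A\in\mathcal{B},\,m(A)\le\varepsilon}\sup_n\frac1{t_n}\int_0^{t_n}m(P_s1_A)\,ds$. A measurable Markovian transition function is a family of Markovian kernels with $P_tP_s=P_{t+s}$ and $(t,x)\mapsto P_tf(x)$ jointly measurable. *)

From HB Require Import structures.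
From mathcomp Require Import all_boot all_order all_algebra.
From mathcomp Require Import all_classical all_reals all_analysis.
From mathcomp Require Import measurable_realfun.
Set Implicit Arguments. Unset Strict Implicit. Unset Printing Implicit Defensive.
Import Order.TTheory GRing.Theory Num.Theory.
Import numFieldNormedType.Exports.
Local Open Scope classical_set_scope.
Local Open Scope ring_scope.

(* A Polish space, given with a complete metric inducing its topology:
   Hausdorff (so a genuine metric), complete, and separable. *)
Definition polish_space (R : realType) (E : completePseudoMetricType R) : Prop :=
  hausdorff_space E /\ exists D : set E, countable D /\ dense D.

Notation borel E := (g_sigma_algebraType (@open E)).

Definition markov_transition_function (R : realType) (d : measure_display)
  (E : measurableType d) (P : R -> R.-pker E ~> E) : Prop :=
  (forall t s : R, 0 <= t -> 0 <= s -> forall (x : E) (A : set E),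
      measurable A -> P (t + s) x A = (\int[P t x]_y P s y A)%E) /\
  (forall f : E -> R, measurable_fun setT f ->
      (exists M : R, forall x, `|f x| <= M) ->
      measurable_fun ((`[(0:R), +oo[%classic : set R) `*` (setT : set E))
        (fun tx : R * E => (\int[P tx.1 tx.2]_y (f y)%:E)%E : \bar R)).

Definition mP (R : realType) (d : measure_display) (E : measurableType d)
  (P : R -> R.-pker E ~> E) (m : {measure set E -> \bar R}) (s : R) (A : set E)
  : \bar R := (\int[m]_x P s x A)%E.

Definition time_avg (R : realType) (d : measure_display) (E : measurableType d)
  (P : R -> R.-pker E ~> E) (m : {measure set E -> \bar R}) (t : R) (A : set E)
  : \bar R :=
  let I : set R := `[0, t]%classic in
  ((t^-1)%:E * \int[lebesgue_measure]_(s in I) mP P m s A)%E.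

Definition cP (R : realType) (d : measure_display) (E : measurableType d)
  (P : R -> R.-pker E ~> E) (m : {measure set E -> \bar R}) (tn : nat -> R)
  : \bar R :=
  lim ((fun eps : R =>
          ereal_sup [set ereal_sup [set time_avg P m (tn n) A | n in setT]
                    | A in [set A | measurable A /\ (m A <= eps%:E)%E]])
       @ 0^'+).

From HB Require Import structures.
From mathcomp Require Import all_boot all_order all_algebra.
From mathcomp Require Import all_classical all_reals all_analysis.
From mathcomp Require Import measurable_realfun.
Import Order.TTheory GRing.Theory Num.Theory.
Import numFieldNormedType.Exports.
Local Open Scope classical_set_scope.
Local Open Scope ring_scope.

(* By Ulam's theorem the finite measure m on the Polish space E is tight: for
   every eps > 0 there is a compact K with m(K^c) <= eps.  Since
   c((P_t)_t, m, (t_n)_n) < m(E), some eps > 0 makes the time averages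
   (1/t_n) int_0^t_n m(P_s 1_A) ds of all sets with m(A) <= eps stay below some
   c < m(E).  The kernels P_s being Markovian, the time averages of K and K^c
   add up to m(E), so those of K stay above m(E) - c > 0 along t_n -> oo. *)

Lemma ultra_bigcup_ord T (F : set_system T) (A : nat -> set T) N :
  UltraFilter F -> F (\bigcup_(i < N) A i) -> exists2 i, (i < N)%N & F (A i).
Proof.
move=> FU; elim: N => [|N IH] FA.
  rewrite bigcup_mkord big_ord0 in FA.
  by exfalso; exact: (@filter_not_empty _ F _ FA).
rewrite bigcup_mkord big_ord_recr /= -bigcup_mkord in FA.
have [FAN|FnAN] := in_ultra_setVsetC (A N) FU; first by exists N.
have [|i iN Fi] := IH; last by exists i => //; exact: leqW.
by apply: filterS (filterI FA FnAN) => x [[//|Ax] /(_ Ax)].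
Qed.

Lemma borel_open_measurable (T : ptopologicalType) (A : set T) :
  open A -> measurable (A : set (borel T)).
Proof. exact: sub_sigma_algebra. Qed.

Section complete_pseudometric.
Context {R : realType} {E : completePseudoMetricType R}.

(* An ultrafilter on a set with finite [e]-ball covers for all [e] is Cauchy. *)
Lemma compact_closed_ball_cover (K : set E) :
  closed K ->
  (forall e : R, 0 < e -> exists N (p : nat -> E),
      K `<=` \bigcup_(i < N) ball (p i) e) -> compact K.
Proof.
move=> cK cover; rewrite compact_ultra => F FU FK.
have FF : ProperFilter F := @ultra_proper _ F FU.
have cF : cauchy F.
  apply: cauchy_exP => e e0; have [N [p Kp]] := cover e e0.
  have [i _ Fi] := @ultra_bigcup_ord _ F _ _ FU (filterS Kp FK).
  by exists (p i).
have cvF := @cauchy_cvg _ F FF cF.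
exists (lim F); split => //.
exact: (@closed_cvg _ _ F FF id K cK FK (lim F) cvF).
Qed.

Lemma compact_bigcap_closure_balls (p : nat -> E) (N : nat -> nat) :
  compact (\bigcap_k closure (\bigcup_(i < N k) ball (p i) k.+1%:R^-1)).
Proof.
apply: compact_closed_ball_cover => [|e e0].
  by apply: closed_bigI => k _; exact: closed_closure.
have e20 : 0 < e / 2 by rewrite divr_gt0.
have [k _ /(_ k (leqnn k)) /= ke] := near_infty_natSinv_lt (PosNum e20).
have k0 : 0 < k.+1%:R^-1 :> R by rewrite invr_gt0.
exists (N k), p => z Kz.
have [y [[i ik yi] zy]] := Kz k I (ball z k.+1%:R^-1) (nbhsx_ballx _ _ k0).
exists i => //; apply: le_ball (ball_triangle yi (ball_sym zy)).
by rewrite [e]splitr lerD // ltW.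
Qed.

Lemma dense_range_interior_ball_cover (D : set E) (p : nat -> E) (r : R) :
  dense D -> D `<=` range p -> 0 < r ->
  \bigcup_i interior (ball (p i) r) = setT.
Proof.
move=> dD Dp r0; apply/seteqP; split => // z _.
have r20 : 0 < r / 2 by rewrite divr_gt0.
have [y [/interior_subset zy /Dp [i _ iy]]] :=
  dD _ (ex_intro _ z (nbhsx_ballx z _ r20)) (@open_interior _ _).
exists i => //; rewrite iy; apply: filterS (nbhsx_ballx z _ r20) => x zx.
by rewrite [r]splitr; apply: ball_triangle (ball_sym zy) zx.
Qed.

End complete_pseudometric.

Local Open Scope ereal_scope.

Lemma measure_setC_bigcap_le d (T : measurableType d) (R : realType)
  (m : {measure set T -> \bar R}) (C : nat -> set T) (eps : R) :
  (0 <= eps)%R ->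
  (forall k, measurable (~` C k)) ->
  (forall k, m (~` C k) <= (eps / (2 ^ k.+1)%:R)%:E) ->
  m (~` \bigcap_k C k) <= eps%:E.
Proof.
move=> eps0 mC mCle; rewrite setC_bigcap.
apply: le_trans (measure_sigma_subadditive m mC _ (@subset_refl _ _)) _.
  exact: bigcupT_measurable.
apply: le_trans (epsilon_trick0 xpredT eps0).
by apply: lee_nneseries => // k _; exact: mCle.
Qed.

Lemma finite_measure_setC_bigcup_ord_le d (T : measurableType d) (R : realType)
  (m : {finite_measure set T -> \bar R}) (A : nat -> set T) (delta : R) :
  (forall i, measurable (A i)) -> \bigcup_i A i = setT -> (0 < delta)%R ->
  exists N, m (~` \bigcup_(i < N) A i) <= delta%:E.
Proof.
move=> mA AT delta0.
pose W N := ~` \bigcup_(i < N) A i.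
have mW N : measurable (W N).
  by apply: measurableC; apply: bigcup_measurable => i _.
have W0 : \bigcap_N W N = set0.
  apply/seteqP; split => // z Wz.
  have [i _ Az] : (\bigcup_i A i) z by rewrite AT.
  by apply: (Wz i.+1 I); exists i => /=.
have : m \o W @ \oo --> 0.
  rewrite -(measure0 m) -W0; apply: nonincreasing_cvg_mu => //.
  - by rewrite ltey_eq fin_num_measure.
  - exact: bigcapT_measurable.
  - move=> a b ab; apply/subsetPset => z Wbz [i /= ia Az].
    by apply: Wbz; exists i => //=; exact: leq_trans ia ab.
have delta0E : 0%:E < delta%:E by rewrite lte_fin.
move=> /(_ _ (open_ereal_lt' delta0E)) [N _ /(_ N (leqnn N)) /ltW mN].
by exists N.
Qed.

Lemma separable_finite_measure_tight {R : realType}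
  {E : completePseudoMetricType R}
  (m : {finite_measure set (borel E) -> \bar R}) {D : set E} :
  countable D -> dense D -> forall eps : R, (0 < eps)%R ->
  exists K : set E, [/\ compact K, closed K & m (~` K) <= eps%:E].
Proof.
move=> cD dD eps eps0.
have [p Dp] : exists p : nat -> E, D `<=` range p.
  by have /pcard_surjP [p ?] := cD; exists p.
pose U k i := interior (ball (p i) (k.+1%:R^-1)%R).
have mU k i : measurable (U k i : set (borel E)).
  by apply: borel_open_measurable; exact: open_interior.
have tail k :
    exists n, m (~` \bigcup_(i < n) U k i) <= (eps / (2 ^ k.+1)%:R)%:E.
  apply: finite_measure_setC_bigcup_ord_le => //.
    by apply: dense_range_interior_ball_cover Dp _; rewrite // invr_gt0.
  by rewrite divr_gt0.
have [N mN] := choice tail.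
pose C k := closure (\bigcup_(i < N k) U k i).
have clK : closed (\bigcap_k C k).
  by apply: closed_bigI => k _; exact: closed_closure.
exists (\bigcap_k C k); split => //.
  apply: subclosed_compact clK _ _; first exact: compact_bigcap_closure_balls.
  apply: subset_bigcap => k _; apply: closureS.
  by apply: subset_bigcup => i _; exact: interior_subset.
apply: measure_setC_bigcap_le (ltW eps0) _ _ => k.
  by apply: borel_open_measurable; apply: closed_openC; exact: closed_closure.
apply: le_trans (mN k); apply: le_measure; rewrite ?inE.
- by apply: borel_open_measurable; apply: closed_openC; exact: closed_closure.
- by apply: measurableC; apply: bigcup_measurable => i _; exact: mU.
- exact/subsetC/subset_closure.
Qed.

Section markov_time_averages.
Context {R : realType} {d : measure_display} {T : measurableType d}.
Variables (P : R -> R.-pker T ~> T) (m : {finite_measure set T -> \bar R}).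

Lemma mP_ge0 s A : 0 <= mP P m s A.
Proof. by apply: integral_ge0 => x _. Qed.

Lemma time_avg_set0 t : time_avg P m t set0 = 0.
Proof.
rewrite /time_avg /= (eq_integral (cst 0)) ?integral0 ?mule0 // => s _.
by rewrite /mP (eq_integral (cst 0)) ?integral0 // => x _; rewrite measure0.
Qed.

Lemma mP_setC s A : measurable A -> mP P m s A + mP P m s (~` A) = m setT.
Proof.
move=> mA; rewrite /mP -ge0_integralD //; last first.
- exact: measurable_kernel (measurableC mA).
- exact: measurable_kernel.
transitivity (\int[m]_x cst 1 x); last by rewrite integral_cst // mul1e.
apply: eq_integral => x _ /=.
rewrite -measureU ?setUv ?setICr //; [exact: prob_kernel|exact: measurableC].
Qed.

(* Fubini--Tonelli for the jointly measurable [(s, x) |-> P_s 1_A (x)]. *)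
Lemma mP_measurable A : markov_transition_function P -> measurable A ->
  measurable_fun (`[0%R, +oo[%classic : set R) (fun s => mP P m s A).
Proof.
move=> [_ jointly] mA.
pose D : set (R * T) := `[0%R, +oo[%classic `*` setT.
have mD : measurable D by apply: measurableX => //; exact: measurable_itv.
have mPA : measurable_fun D (fun sx : R * T => P sx.1 sx.2 A).
  have bounded : exists M : R, forall x, (`|\1_A x : R| <= M)%R.
    exists 1%R => x; rewrite indicE.
    by case: (x \in A); rewrite ?normr1 ?normr0.
  have m1_A : measurable_fun setT (\1_A : T -> R).
    exact: (@measurable_indic _ _ R setT _ mA).
  apply: eq_measurable_fun (jointly _ m1_A bounded) => sx _.
  by rewrite integral_indic // setIT.
pose g := (fun sx : R * T => P sx.1 sx.2 A) \_ D.
have mg : measurable_fun setT g by exact: (measurable_restrictT _ mD).1 mPA.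
have g0 sx : 0 <= g sx by rewrite /g /patch; case: ifP.
apply: eq_measurable_fun (measurable_funS _ (@subsetT _ _)
  (measurable_fun_fubini_tonelli_F (m2 := m) g mg g0)) => // s /[!inE] s0.
apply: eq_integral => x _; rewrite /g /patch ifT // inE; split => //.
Qed.

Lemma time_avg_setC t A : markov_transition_function P -> measurable A ->
  (0 < t)%R -> time_avg P m t A + time_avg P m t (~` A) = m setT.
Proof.
move=> markovP mA t0; rewrite /time_avg /=.
have sub : (`[0%R, t]%classic : set R) `<=` `[0%R, +oo[%classic.
  by move=> s /=; rewrite !in_itv /= => /andP[-> _].
have mPt B : measurable B ->
    measurable_fun (`[0%R, t]%classic : set R) (fun s => mP P m s B).
  move=> mB; have mPB := mP_measurable _ markovP mB.
  exact: measurable_funS (measurable_itv _) sub mPB.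
rewrite -ge0_muleDr; last 2 first.
- by apply: integral_ge0 => s _; exact: mP_ge0.
- by apply: integral_ge0 => s _; exact: mP_ge0.
rewrite -ge0_integralD //; last 4 first.
- by move=> s _; exact: mP_ge0.
- exact: mPt.
- by move=> s _; exact: mP_ge0.
- by apply: mPt; exact: measurableC.
under eq_integral do rewrite mP_setC //.
have leb_t : lebesgue_measure (`[0%R, t]%classic : set R) = t%:E.
  by rewrite lebesgue_measure_itv /= lte_fin t0 sube0.
rewrite integral_cst //; transitivity ((t^-1)%:E * (m setT * t%:E)).
  by congr (_ * (_ * _)); exact: leb_t.
by rewrite muleCA -EFinM mulVf ?gt_eqF // mule1.
Qed.

Definition small_set_avg_sup (tn : nat -> R) (eps : R) : \bar R :=
  ereal_sup [set ereal_sup [set time_avg P m (tn n) A | n in setT]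
            | A in [set A | measurable A /\ m A <= eps%:E]].

Lemma time_avg_le_small_set_avg_sup tn eps n A :
  measurable A -> m A <= eps%:E ->
  time_avg P m (tn n) A <= small_set_avg_sup tn eps.
Proof.
move=> mA mAeps.
apply: (@le_trans _ _ (ereal_sup [set time_avg P m (tn k) A | k in setT])).
  by apply: ereal_sup_ubound; exists n.
by apply: ereal_sup_ubound; exists A.
Qed.

Lemma small_set_avg_sup_ge0 tn eps :
  (0 <= eps)%R -> 0 <= small_set_avg_sup tn eps.
Proof.
move=> eps0; rewrite -(time_avg_set0 (tn 0%N)).
by apply: time_avg_le_small_set_avg_sup; rewrite ?measure0 ?lee_fin.
Qed.

Lemma cP_lt_small_set_avg_sup tn x : cP P m tn < x ->
  exists2 eps, (0 < eps)%R & small_set_avg_sup tn eps < x.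
Proof.
have nd : {in Interval (BRight 0%R) (BInfty R false) &,
    nondecreasing_fun (small_set_avg_sup tn)}.
  move=> a b _ _ ab; apply: le_ereal_sup => _ [A [mA mAa] <-].
  by exists A => //; split => //; apply: le_trans mAa _; rewrite lee_fin.
have := @nondecreasing_at_right_cvge R _ 0%R (BInfty R false) isT nd.
move=> /(cvg_lim (@ereal_hausdorff R)); rewrite /cP => ->.
move=> /ereal_inf_lt[_ [eps eps0 <-] lt_x].
by exists eps => //; move: eps0; rewrite /= in_itv /= andbT.
Qed.

End markov_time_averages.

Lemma limf_esup_pinfty_ge_seq (R : realType) (f : R -> \bar R) (u : nat -> R)
    (c : \bar R) :
  (u @ \oo --> +oo)%R -> (\forall n \near \oo, c <= f (u n)) ->
  c <= limf_esup f +oo_R.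
Proof.
move=> u_oo c_le; apply: le_ereal_inf_tmp => _ [V HV <-].
have Vu : \forall n \near \oo, V (u n) := u_oo V HV.
have [n [Vun c_le_n]] := filter_ex (filterI Vu c_le).
by apply: le_ereal_sup_tmp; exists (f (u n)) => //; exists (u n).
Qed.

Local Close Scope ereal_scope.

Theorem proposition3p2 (R : realType) (E : completePseudoMetricType R)
  (P : R -> R.-pker (borel E) ~> (borel E))
  (m : {finite_measure set (borel E) -> \bar R}) (tn : nat -> R) :
  polish_space E ->
  markov_transition_function P ->
  m setT != 0%E ->
  {homo tn : i j / (i <= j)%N >-> i <= j} ->
  tn @ \oo --> +oo ->
  (cP P m tn < m setT)%E ->
  exists K : set E, compact K /\
    (0 < limf_esup (fun t : R => time_avg P m t K) +oo_R)%E.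
Proof.
move=> [_ [D [cD dD]]] markovP _ _ tn_oo.
move=> /cP_lt_small_set_avg_sup[eps eps0 c_lt].
set c := small_set_avg_sup P m tn eps in c_lt.
have c_fin : c \is a fin_num.
  rewrite ge0_fin_numE ?small_set_avg_sup_ge0 ?ltW //.
  exact: lt_le_trans c_lt (leey _).
have [K [cK clK mCK_le]] := separable_finite_measure_tight m cD dD _ eps0.
have mCK : measurable (~` K : set (borel E)).
  by apply: borel_open_measurable; exact: closed_openC.
have mK : measurable (K : set (borel E)).
  by rewrite -[K]setCK; exact: measurableC.
exists K; split => //.
apply: (@lt_le_trans _ _ (m setT - c)%E); first by rewrite sube_gt0.
have tn_gt0 : \forall n \near \oo, 0 < tn n.
  by apply: (tn_oo [set x | 0 < x]); apply: nbhs_pinfty_gt; exact: real0.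
apply: limf_esup_pinfty_ge_seq tn_oo _; apply: filterS tn_gt0 => n tn0.
rewrite leeBlDr // -(time_avg_setC _ _ _ _ markovP mK tn0).
by apply: leeD2l; exact: time_avg_le_small_set_avg_sup.
Qed.
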